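(* For $I=(z_1^3-z_3z_2,\,z_2^2)\subset\mathcal{O}_3$ one has $\mathbf{T}_2(I)=3$ and $D_2(I)\geq 4$. More precisely, let $V=\{z_1^3-z_3z_2=0\}\subset\mathbb{C}^3$; for every plane $S_{a,b}=\{z_3+az_1+bz_2=0\}$ with $a\neq0$, $b\neq0$, the germ $V\cap S_{a,b}$ at $0$ has an irreducible 1-dimensional component with minimal parametrization $\gamma_{a,b}$ such that $\frac{v(g\circ\gamma_{a,b})}{v(\gamma_{a,b})}\geq 4$ for all $g\in I$.
   Context: $\mathcal{O}_n$ denotes the local ring of germs at $0\in\mathbb{C}^n$ of holomorphic functions. $\Gamma$ denotes the set of non-constant germs of holomorphic maps $z\colon(\mathbb{C},0)\to(\mathbb{C}^n,0)$; $v(z)$ is the order of vanishing of $z$ at $0$ and $v(g\circ z)$ the order of vanishing of $g\circ z$ ($v(0)=\infty$). For an ideal $I\subset\mathcal{O}_n$, $\mathbf{T}_1(I)=\sup_{z\in\Gamma}\inf_{g\in I}\frac{v(g\circ z)}{v(z)}$, and $\mathbf{T}_q(I)=\inf_{\{w_1,\dots,w_{q-1}\}}\mathbf{T}_1(I,w_1,\dots,w_{q-1})$ over all linear functions $w_j$. Catlin $q$-type: let $G^{n-q+1}$ be the Grassmannian of $(n-q+1)$-dimensional linear subspaces of $\mathbb{C}^n$. For a germ $(V^q,0)$ of a $q$-dimensional complex analytic variety, for $S$ in a non-empty Zariski open subset of $G^{n-q+1}$ the germ $V^q\cap S$ at $0$ consists of finitely many irreducible 1-dimensional components with minimal parametrizations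 $\gamma_S^k$, $k=1,\dots,P$; for each $g\in\mathcal{O}_n$ the quantity $\max_{k}\frac{v(g\circ\gamma_S^k)}{v(\gamma_S^k)}$ takes one common value (its generic value) for all $S$ in a non-empty Zariski open subset of $G^{n-q+1}$. Then $D_q(I)=\sup_{V^q}\inf_{g\in I}\big(\text{generic value over }S\text{ of }\max_{k}\frac{v(g\circ\gamma_S^k)}{v(\gamma_S^k)}\big)$. *)

From Stdlib Require Import Reals List Arith.
Import ListNotations.
Open Scope R_scope.

Record Cx := mkC { re : R ; im : R }.
Definition C0 : Cx := mkC 0 0.
Definition C1 : Cx := mkC 1 0.
Definition Cadd (x y : Cx) : Cx := mkC (re x + re y) (im x + im y).
Definition Copp (x : Cx) : Cx := mkC (- re x) (- im x).
Definition Cmul (x y : Cx) : Cx :=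
  mkC (re x * re y - im x * im y) (re x * im y + im x * re y).
Definition Cmod (x : Cx) : R := sqrt (re x ^ 2 + im x ^ 2).
Definition Csum (l : list Cx) : Cx := fold_right Cadd C0 l.

(** * Power series in n variables (germs at 0 of C^n)
    A multi-index is a list of naturals of length n; a series is its
    coefficient function (only multi-indices of length n are meaningful). *)
Definition series := list nat -> Cx.

Definition msize (a : list nat) : nat := fold_right Nat.add 0%nat a.

(** convergent power series = germs of holomorphic functions, O_n *)
Definition convergent (n : nat) (f : series) : Prop :=
  exists M r : R, 0 < r /\
    forall a, length a = n -> Cmod (f a) <= M * r ^ (msize a).

Definition series_eq (n : nat) (f g : series) : Prop :=
  forall a, length a = n -> f a = g a.

Definition sadd (f g : series) : series := fun a => Cadd (f a) (g a).
Definition szero : series := fun _ => C0.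

Fixpoint splits (a : list nat) : list (list nat * list nat) :=
  match a with
  | [] => [([], [])]
  | x :: a' =>
      flat_map (fun i => map (fun bc => (i :: fst bc, (x - i)%nat :: snd bc))
                             (splits a'))
               (seq 0 (S x))
  end.

Definition smul (f g : series) : series :=
  fun a => Csum (map (fun bc => Cmul (f (fst bc)) (g (snd bc))) (splits a)).

Definition monomial (b : list nat) (c : Cx) : series :=
  fun a => if list_eq_dec Nat.eq_dec a b then c else C0.

(** i-th unit multi-index in n variables (coordinates numbered from 0) *)
Definition unit_idx (n i : nat) : list nat :=
  map (fun j => if Nat.eqb j i then 1%nat else 0%nat) (seq 0 n).

Definition linear_form (n : nat) (c : nat -> Cx) : series :=
  fold_right sadd szero (map (fun i => monomial (unit_idx n i) (c i)) (seq 0 n)).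

Fixpoint lin_comb (hs gs : list series) : series :=
  match hs, gs with
  | h :: hs', g :: gs' => sadd (smul h g) (lin_comb hs' gs')
  | _, _ => szero
  end.

Definition in_ideal (n : nat) (gens : list series) (g : series) : Prop :=
  exists hs : list series, length hs = length gens /\
    Forall (convergent n) hs /\ series_eq n g (lin_comb hs gens).

Definition series1 := nat -> Cx.

Definition one1 : series1 := fun k => if Nat.eqb k 0 then C1 else C0.
Definition mul1 (s t : series1) : series1 :=
  fun k => Csum (map (fun j => Cmul (s j) (t (k - j)%nat)) (seq 0 (S k))).
Fixpoint pow1 (s : series1) (m : nat) : series1 :=
  match m with O => one1 | S m' => mul1 s (pow1 s m') end.

Definition convergent1 (s : series1) : Prop :=
  exists M r : R, 0 < r /\ forall k, Cmod (s k) <= M * r ^ k.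

(** order of vanishing of a one-variable series; None = infinity *)
Definition ord1 (s : series1) (o : option nat) : Prop :=
  match o with
  | Some k => s k <> C0 /\ forall j, (j < k)%nat -> s j = C0
  | None => forall j, s j = C0
  end.

(** composition of one-variable series, for phi with phi 0 = 0 *)
Definition comp1 (s phi : series1) : series1 :=
  fun k => Csum (map (fun m => Cmul (s m) (pow1 phi m k)) (seq 0 (S k))).

(** a curve germ (C,0) -> (C^n,0): coordinate i (i < n) has coefficients z i *)
Definition curve := nat -> series1.

Definition in_Gamma (n : nat) (z : curve) : Prop :=
  (forall i, (i < n)%nat -> convergent1 (z i) /\ z i 0%nat = C0) /\
  exists i k, (i < n)%nat /\ z i k <> C0.

Definition curve_ord (n : nat) (z : curve) (m : nat) : Prop :=
  (exists i, (i < n)%nat /\ z i m <> C0) /\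
  forall i j, (i < n)%nat -> (j < m)%nat -> z i j = C0.

Fixpoint mono_from (z : curve) (i : nat) (a : list nat) : series1 :=
  match a with
  | [] => one1
  | x :: a' => mul1 (pow1 (z i) x) (mono_from z (S i) a')
  end.

Fixpoint bounded_idx (n k : nat) : list (list nat) :=
  match n with
  | O => [[]]
  | S n' => flat_map (fun x => map (cons x) (bounded_idx n' (k - x)))
                     (seq 0 (S k))
  end.

(** g ∘ z for a curve with z(0) = 0 (coefficient k only involves |a| <= k) *)
Definition gcomp (n : nat) (g : series) (z : curve) : series1 :=
  fun k => Csum (map (fun a => Cmul (g a) (mono_from z 0 a k)) (bounded_idx n k)).

Inductive ER := Fin (r : R) | PInf.
Definition ER_le (x y : ER) : Prop :=
  match x, y with
  | _, PInf => True
  | PInf, Fin _ => False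
  | Fin a, Fin b => a <= b
  end.

Definition IsSup (P : ER -> Prop) (s : ER) : Prop :=
  (forall x, P x -> ER_le x s) /\ (forall u, (forall x, P x -> ER_le x u) -> ER_le s u).
Definition IsInf (P : ER -> Prop) (s : ER) : Prop :=
  (forall x, P x -> ER_le s x) /\ (forall u, (forall x, P x -> ER_le u x) -> ER_le u s).

Definition ratio (n : nat) (g : series) (z : curve) (r : ER) : Prop :=
  exists m, curve_ord n z m /\
   ((exists k, ord1 (gcomp n g z) (Some k) /\ r = Fin (INR k / INR m)) \/
    (ord1 (gcomp n g z) None /\ r = PInf)).

Definition T1_is (n : nat) (J : series -> Prop) (t : ER) : Prop :=
  IsSup (fun s => exists z, in_Gamma n z /\
                   IsInf (fun r => exists g, J g /\ ratio n g z r) s) t.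

Definition Tq_is (n q : nat) (gens : list series) (t : ER) : Prop :=
  IsInf (fun s => exists ws : list (nat -> Cx), length ws = (q - 1)%nat /\
            T1_is n (in_ideal n (gens ++ map (linear_form n) ws)) s) t.

Definition minimal_param (n : nat) (z : curve) : Prop :=
  ~ exists (delta : curve) (phi : series1),
      (forall i, (i < n)%nat -> convergent1 (delta i) /\ delta i 0%nat = C0) /\
      convergent1 phi /\ phi 0%nat = C0 /\ phi 1%nat = C0 /\
      forall i, (i < n)%nat -> forall k, z i k = comp1 (delta i) phi k.

(** * The data of the theorem (n = 3, z1,z2,z3 are coordinates 0,1,2) *)
Definition f1 : series :=
  sadd (monomial [3;0;0]%nat C1) (monomial [0;1;1]%nat (Copp C1)).
Definition f2 : series := monomial [0;2;0]%nat C1.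
Definition I_gens : list series := [f1; f2].

Definition plane_form (a b : Cx) : series :=
  linear_form 3 (fun i => match i with 0%nat => a | 1%nat => b | _ => C1 end).

From Pilot Require Import Defs.
From Stdlib Require Import Reals List Arith Lia Lra Classical Wf_nat FunctionalExtensionality.
Import ListNotations.
(* Reals also exports names [C1] and [pow1]; re-importing makes them refer to [Defs]. *)
Import Defs.
Open Scope R_scope.

(* Lower bound T_2(I) >= 3: for every linear form w there is a line z through 0 with
   w∘z = 0 (the z1-axis if w does not involve z1, otherwise a line in {z2 = 0}), and
   along it every element of (I, w) vanishes to order >= 3 = 3 v(z).
   Upper bound: take w = z3. For a curve z of order m, either z3∘z has order <= 3m, or
   z3∘z vanishes to order > 3m, and then z1^3 - z3 z2 has order exactly 3m when z1 has
   order m, while z2^2 has order 2m otherwise.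
   Plane sections: gam a b is t ↦ (-tp, -t^2 p, t p^2) with p = a + bt. It lies on V and
   on S_{a,b}; since f1∘γ = 0 and f2∘γ = t^4 p^2, the ideal I pulls back to order >= 4,
   whereas v(γ) = 1. It is minimal because its t-coefficient -a is nonzero, which no
   reparametrization by a series of order >= 2 can produce. *)

Lemma Cx_ext x y : re x = re y -> im x = im y -> x = y.
Proof. destruct x, y; simpl; intros; subst; reflexivity. Qed.

Definition Csub (x y : Cx) : Cx := Cadd x (Copp y).

Lemma Cx_ring : ring_theory C0 C1 Cadd Cmul Csub Copp (@eq Cx).
Proof. constructor; intros; unfold Csub; apply Cx_ext; simpl; ring. Qed.

Add Ring Cx_ring : Cx_ring.

Lemma Cmul_0_l x : Cmul C0 x = C0. Proof. ring. Qed.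
Lemma Cadd_0_r x : Cadd x C0 = x. Proof. ring. Qed.
Lemma Cmul_1_l x : Cmul C1 x = x. Proof. ring. Qed.
Lemma Cmul_1_r x : Cmul x C1 = x. Proof. ring. Qed.

Lemma Cmul_neq0 x y : x <> C0 -> y <> C0 -> Cmul x y <> C0.
Proof.
  intros Hx Hy H. destruct x as [a b], y as [c d]. injection H as H1 H2.
  assert (E : (a * a + b * b) * (c * c + d * d) = 0) by nra.
  apply Rmult_integral in E. destruct E as [E|E].
  - apply Hx. assert (a = 0) by nra. assert (b = 0) by nra. subst; reflexivity.
  - apply Hy. assert (c = 0) by nra. assert (d = 0) by nra. subst; reflexivity.
Qed.

Lemma Copp_neq0 x : x <> C0 -> Copp x <> C0.
Proof.
  intros Hx H. apply Hx. replace x with (Copp (Copp x)) by ring. rewrite H. ring.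
Qed.

Lemma C1_neq0 : C1 <> C0.
Proof. intro H; injection H; lra. Qed.

Arguments Cmul : simpl never.
Arguments Cadd : simpl never.
Arguments Copp : simpl never.

Lemma Csum_app l1 l2 : Csum (l1 ++ l2) = Cadd (Csum l1) (Csum l2).
Proof. induction l1; simpl. - ring. - rewrite IHl1. ring. Qed.

Lemma Csum_map_zero {A} (F : A -> Cx) l : (forall x, In x l -> F x = C0) -> Csum (map F l) = C0.
Proof. induction l; simpl; intros H; auto. rewrite H, IHl by auto. ring. Qed.

Lemma Csum_map_add {A} (F G : A -> Cx) l :
  Csum (map (fun x => Cadd (F x) (G x)) l) = Cadd (Csum (map F l)) (Csum (map G l)).
Proof. induction l; simpl. - ring. - rewrite IHl; ring. Qed.

Lemma Csum_map_ext {A} (F G : A -> Cx) l :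
  (forall x, In x l -> F x = G x) -> Csum (map F l) = Csum (map G l).
Proof. intros H; rewrite (map_ext_in F G l H); auto. Qed.

Lemma Csum_flat_map {A B} (F : B -> Cx) (g : A -> list B) l :
  Csum (map F (flat_map g l)) = Csum (map (fun x => Csum (map F (g x))) l).
Proof. induction l; simpl; auto. rewrite map_app, Csum_app, IHl; auto. Qed.

Lemma Csum_seq_single (G : nat -> Cx) x0 s len :
  (forall x, (s <= x < s + len)%nat -> x <> x0 -> G x = C0) ->
  Csum (map G (seq s len)) = if andb (s <=? x0) (x0 <? s + len) then G x0 else C0.
Proof.
  revert s. induction len; intros s H; simpl.
  - destruct (Nat.leb_spec s x0), (Nat.ltb_spec x0 (s + 0)); simpl; auto; lia.
  - rewrite IHlen by (intros; apply H; lia). destruct (Nat.eq_dec s x0).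
    + subst. rewrite Nat.leb_refl.
      destruct (Nat.leb_spec (S x0) x0), (Nat.ltb_spec x0 (x0 + S len)); simpl; try lia. ring.
    + rewrite H by (auto; lia).
      destruct (Nat.leb_spec s x0), (Nat.leb_spec (S s) x0), (Nat.ltb_spec x0 (S s + len)),
        (Nat.ltb_spec x0 (s + S len)); simpl; try ring; lia.
Qed.

Lemma Csum_seq0_single (G : nat -> Cx) x0 n :
  (forall x, (x <= n)%nat -> x <> x0 -> G x = C0) -> (x0 <= n)%nat ->
  Csum (map G (seq 0 (S n))) = G x0.
Proof.
  intros H Hx. rewrite (Csum_seq_single G x0) by (intros; apply H; lia).
  destruct (Nat.leb_spec 0 x0), (Nat.ltb_spec x0 (0 + S n)); simpl; auto; lia.
Qed.

(** * Series in one variable *)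

Definition vanishes_below (s : series1) (p : nat) : Prop :=
  forall j, (j < p)%nat -> s j = C0.

Definition vanishes_above (s : series1) (p : nat) : Prop :=
  forall j, (p < j)%nat -> s j = C0.

Lemma one1_vanishes_above : vanishes_above one1 0.
Proof. intros [|j] Hj; [lia | reflexivity]. Qed.

Lemma mul1_one_l s : mul1 one1 s = s.
Proof.
  apply functional_extensionality; intros k. unfold mul1.
  rewrite (Csum_seq0_single _ 0%nat); [| | lia].
  - rewrite Nat.sub_0_r. apply Cmul_1_l.
  - intros j _ Hj. rewrite one1_vanishes_above by lia. ring.
Qed.

Lemma mul1_one_r s : mul1 s one1 = s.
Proof.
  apply functional_extensionality; intros k. unfold mul1.
  rewrite (Csum_seq0_single _ k); [| | lia].
  - rewrite Nat.sub_diag. apply Cmul_1_r.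
  - intros j Hjk Hj. rewrite one1_vanishes_above by lia. ring.
Qed.

Lemma pow1_0 s : pow1 s 0 = one1.
Proof. reflexivity. Qed.

Lemma pow1_1 s : pow1 s 1 = s.
Proof. apply mul1_one_r. Qed.

Lemma mul1_vanishes_below s t p q :
  vanishes_below s p -> vanishes_below t q -> vanishes_below (mul1 s t) (p + q)%nat.
Proof.
  intros Hs Ht k Hk. unfold mul1. apply Csum_map_zero. intros j Hj. apply in_seq in Hj.
  destruct (Nat.ltb_spec j p).
  - rewrite Hs by auto; ring.
  - rewrite Ht by lia; ring.
Qed.

Lemma mul1_vanishes_above s t p q :
  vanishes_above s p -> vanishes_above t q -> vanishes_above (mul1 s t) (p + q)%nat.
Proof.
  intros Hs Ht k Hk. unfold mul1. apply Csum_map_zero. intros j Hj. apply in_seq in Hj.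
  destruct (Nat.ltb_spec p j).
  - rewrite Hs by auto; ring.
  - rewrite Ht by lia; ring.
Qed.

Lemma mul1_at_sum s t p q :
  vanishes_below s p -> vanishes_below t q -> mul1 s t (p + q)%nat = Cmul (s p) (t q).
Proof.
  intros Hs Ht. unfold mul1. rewrite (Csum_seq0_single _ p); [| |lia].
  - do 2 f_equal. lia.
  - intros j Hjk Hj. destruct (Nat.ltb_spec j p).
    + rewrite Hs by auto; ring.
    + rewrite Ht by lia; ring.
Qed.

Lemma ord1_mul1 s t p q :
  ord1 s (Some p) -> ord1 t (Some q) -> ord1 (mul1 s t) (Some (p + q)%nat).
Proof.
  intros [Hsp Hs] [Htq Ht]. split.
  - rewrite mul1_at_sum by assumption. now apply Cmul_neq0.
  - now apply mul1_vanishes_below.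
Qed.

Lemma pow1_vanishes_below s p m : vanishes_below s p -> vanishes_below (pow1 s m) (m * p)%nat.
Proof.
  intros Hs. induction m; simpl.
  - intros j Hj; lia.
  - now apply mul1_vanishes_below.
Qed.

Lemma pow1_vanishes_above s p m : vanishes_above s p -> vanishes_above (pow1 s m) (m * p)%nat.
Proof.
  intros Hs. induction m; simpl.
  - apply one1_vanishes_above.
  - now apply mul1_vanishes_above.
Qed.

Lemma ord1_pow1 s p m : ord1 s (Some p) -> ord1 (pow1 s m) (Some (m * p)%nat).
Proof.
  intros Hs. induction m; simpl.
  - split; [apply C1_neq0 | intros j Hj; lia].
  - now apply ord1_mul1.
Qed.

Lemma ord1_exists s : (exists k, s k <> C0) -> exists k, ord1 s (Some k).
Proof.
  intros Hne.
  destruct (dec_inh_nat_subset_has_unique_least_element (fun k => s k <> C0)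
              (fun k => classic _) Hne) as [k [[Hk Hmin] _]].
  exists k. split; auto. intros j Hj. apply NNPP. intros Hsj. specialize (Hmin j Hsj). lia.
Qed.

Lemma ord1_ext s t o : (forall k, s k = t k) -> ord1 s o -> ord1 t o.
Proof.
  intros Hst. destruct o as [p|]; simpl; intros H.
  - rewrite <- !Hst. split; [apply H|]. intros j Hj. rewrite <- Hst. now apply H.
  - intros j. rewrite <- Hst. apply H.
Qed.

Lemma ord1_add_higher s t p :
  ord1 s (Some p) -> vanishes_below t (S p) -> ord1 (fun k => Cadd (s k) (t k)) (Some p).
Proof.
  intros [Hsp Hs] Ht. split.
  - rewrite Ht by lia. now rewrite Cadd_0_r.
  - intros j Hj. rewrite Hs, Ht by lia. ring.
Qed.

Lemma convergent1_of_vanishes_above s p : vanishes_above s p -> convergent1 s.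
Proof.
  intros Hs. set (f j := Cmod (s j)).
  assert (Hf : forall j, 0 <= f j) by (intros; apply sqrt_pos).
  assert (Hle : forall q k, (k <= q)%nat -> f k <= sum_f_R0 f q).
  { induction q; intros k Hk; simpl.
    - replace k with 0%nat by lia. lra.
    - destruct (Nat.eq_dec k (S q)) as [->|Hne].
      + pose proof (cond_pos_sum f q Hf). lra.
      + pose proof (IHq k ltac:(lia)). pose proof (Hf (S q)). lra. }
  exists (sum_f_R0 f p), 1. split; [lra|]. intros k. rewrite Rfunctions.pow1, Rmult_1_r.
  destruct (Nat.leb_spec k p).
  - now apply Hle.
  - unfold f. rewrite Hs by lia. unfold Cmod; simpl.
    rewrite Rmult_0_l, Rplus_0_r, sqrt_0. now apply cond_pos_sum.
Qed.

(** * Curves and composition with them *)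

Definition through_origin (n : nat) (z : curve) : Prop :=
  forall i, (i < n)%nat -> z i 0%nat = C0.

Lemma curve_ord_unique n z m m' : curve_ord n z m -> curve_ord n z m' -> m = m'.
Proof.
  intros [[i [Hi Hm]] Hlow] [[i' [Hi' Hm']] Hlow'].
  destruct (Nat.lt_total m m') as [Hlt|[Heq|Hlt]]; auto; exfalso.
  - apply Hm. now apply Hlow'.
  - apply Hm'. now apply Hlow.
Qed.

Lemma curve_ord_exists n z : in_Gamma n z -> exists m, curve_ord n z m /\ (0 < m)%nat.
Proof.
  intros [Hz [i [k [Hi Hk]]]].
  destruct (dec_inh_nat_subset_has_unique_least_element
              (fun m => exists i, (i < n)%nat /\ z i m <> C0) (fun m => classic _))
    as [m [[[i0 [Hi0 Hm]] Hmin] _]]; [eauto|].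
  exists m. split; [split|].
  - eauto.
  - intros i' j Hi' Hj. apply NNPP. intros Hne.
    specialize (Hmin j (ex_intro _ i' (conj Hi' Hne))). lia.
  - destruct m; [|lia]. exfalso. apply Hm. now apply Hz.
Qed.

Lemma curve_ord_1 n z i : through_origin n z -> (i < n)%nat -> z i 1%nat <> C0 -> curve_ord n z 1.
Proof.
  intros Hz Hi H1. split; eauto.
  intros i' j Hi' Hj. replace j with 0%nat by lia. auto.
Qed.

Lemma ord1_coordinate n z m i :
  curve_ord n z m -> (i < n)%nat -> z i m <> C0 -> ord1 (z i) (Some m).
Proof. intros [_ Hlow] Hi Hm. split; auto. Qed.

Lemma in_Gamma_polynomial n z d i :
  (forall i, (i < n)%nat -> vanishes_above (z i) d) -> through_origin n z ->
  (i < n)%nat -> z i 1%nat <> C0 -> in_Gamma n z.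
Proof.
  intros Hd Hz Hi H1. split; [|eauto].
  intros i' Hi'. split; auto. eapply convergent1_of_vanishes_above; eauto.
Qed.

Lemma comp1_coeff1 s phi : phi 0%nat = C0 -> phi 1%nat = C0 -> comp1 s phi 1%nat = C0.
Proof.
  intros H0 H1. unfold comp1. cbn [seq map Csum fold_right].
  rewrite pow1_0, pow1_1, H1. unfold one1; simpl. ring.
Qed.

Lemma minimal_param_of_coeff1 n z i : (i < n)%nat -> z i 1%nat <> C0 -> minimal_param n z.
Proof.
  intros Hi Hz1 [delta [phi [_ [_ [H0 [H1 Hcomp]]]]]].
  apply Hz1. rewrite Hcomp by assumption. now apply comp1_coeff1.
Qed.

Lemma mono_from_vanishes_below z i a :
  (forall j, (i <= j < i + length a)%nat -> z j 0%nat = C0) ->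
  vanishes_below (mono_from z i a) (msize a).
Proof.
  revert i; induction a as [|x a IH]; intros i Hz; simpl.
  - intros j Hj; lia.
  - replace (x + msize a)%nat with (x * 1 + msize a)%nat by lia.
    apply mul1_vanishes_below.
    + apply pow1_vanishes_below. intros j Hj. replace j with 0%nat by lia. apply Hz; simpl; lia.
    + apply IH. intros j Hj. apply Hz; simpl; lia.
Qed.

Lemma bounded_idx_length n k a : In a (bounded_idx n k) -> length a = n.
Proof.
  revert k a; induction n; intros k a H; cbn [bounded_idx] in H.
  - destruct H as [<-|[]]; reflexivity.
  - apply in_flat_map in H as [x [_ H]]. apply in_map_iff in H as [b [<- Hb]].
    simpl. f_equal. eauto.
Qed.

Lemma Csum_bounded_idx_single n k a0 (F : list nat -> Cx) :
  length a0 = n -> (forall a, a <> a0 -> F a = C0) ->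
  Csum (map F (bounded_idx n k)) = if (msize a0 <=? k)%nat then F a0 else C0.
Proof.
  revert k a0 F; induction n; intros k a0 F Hl HF.
  - destruct a0; [|discriminate]. simpl. ring.
  - destruct a0 as [|x0 a0]; [discriminate|]. injection Hl as Hl.
    cbn [bounded_idx]. rewrite Csum_flat_map, (Csum_seq_single _ x0).
    + rewrite map_map, (IHn (k - x0)%nat a0 (fun a => F (x0 :: a))); auto.
      * simpl msize.
        destruct (Nat.leb_spec 0 x0), (Nat.ltb_spec x0 (0 + S k)),
          (Nat.leb_spec (msize a0) (k - x0)),
          (Nat.leb_spec (x0 + msize a0) k); simpl; auto; lia.
      * intros a Ha. apply HF. congruence.
    + intros x _ Hx. rewrite map_map. apply Csum_map_zero. intros a _. apply HF. congruence.
Qed.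

Lemma gcomp_ext n g g' z k : series_eq n g g' -> gcomp n g z k = gcomp n g' z k.
Proof.
  intros H. unfold gcomp. apply Csum_map_ext. intros a Ha.
  rewrite H; auto. eapply bounded_idx_length; eauto.
Qed.

Lemma gcomp_sadd n f g z k : gcomp n (sadd f g) z k = Cadd (gcomp n f z k) (gcomp n g z k).
Proof. unfold gcomp, sadd. rewrite <- Csum_map_add. apply Csum_map_ext. intros; ring. Qed.

Lemma gcomp_szero n z k : gcomp n szero z k = C0.
Proof. unfold gcomp. apply Csum_map_zero. intros a _. apply Cmul_0_l. Qed.

Lemma gcomp_monomial n b c z k :
  length b = n -> through_origin n z -> gcomp n (monomial b c) z k = Cmul c (mono_from z 0 b k).
Proof.
  intros Hl Hz. unfold gcomp. rewrite (Csum_bounded_idx_single n k b); auto.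
  - unfold monomial. destruct (list_eq_dec Nat.eq_dec b b); [|congruence].
    destruct (Nat.leb_spec (msize b) k); auto.
    rewrite mono_from_vanishes_below by (auto; intros j Hj; apply Hz; lia). ring.
  - intros a Ha. unfold monomial. destruct (list_eq_dec Nat.eq_dec a b); [congruence|]. ring.
Qed.

(** * Ideals *)

Definition one_series (n : nat) : series := monomial (repeat 0%nat n) C1.

Lemma monomial_cons x b c y a :
  monomial (x :: b) c (y :: a) = if Nat.eqb y x then monomial b c a else C0.
Proof.
  unfold monomial. destruct (Nat.eqb_spec y x) as [->|Hne].
  - destruct (list_eq_dec Nat.eq_dec (x :: a) (x :: b)), (list_eq_dec Nat.eq_dec a b); congruence.
  - destruct (list_eq_dec Nat.eq_dec (y :: a) (x :: b)); congruence.
Qed.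

Lemma smul_one_l n f a : length a = n -> smul (one_series n) f a = f a.
Proof.
  intros <-. unfold smul, one_series. revert f; induction a as [|x a IH]; intros f.
  - simpl. unfold monomial. simpl. ring.
  - cbn [splits length repeat]. rewrite Csum_flat_map, (Csum_seq0_single _ 0%nat); [| |lia].
    + rewrite map_map, <- (IH (fun c => f (x :: c))).
      apply Csum_map_ext. intros bc _. simpl. rewrite monomial_cons, Nat.sub_0_r. reflexivity.
    + intros i _ Hi. rewrite map_map. apply Csum_map_zero. intros bc _. simpl.
      rewrite monomial_cons. destruct (Nat.eqb_spec i 0); [congruence|]. ring.
Qed.

Lemma smul_szero_l f a : smul szero f a = C0.
Proof. unfold smul. apply Csum_map_zero. intros; apply Cmul_0_l. Qed.

Lemma lin_comb_szero (gs : list series) l a : lin_comb (repeat szero l) gs a = C0.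
Proof.
  revert gs; induction l; intros [|g gs]; try reflexivity.
  simpl. unfold sadd. rewrite smul_szero_l, IHl. ring.
Qed.

Lemma szero_convergent n : convergent n szero.
Proof.
  exists 0, 1. split; [lra|]. intros a _. unfold Cmod, szero; simpl.
  rewrite Rmult_0_l, Rplus_0_r, sqrt_0. lra.
Qed.

Lemma one_series_convergent n : convergent n (one_series n).
Proof.
  exists 1, 1. split; [lra|]. intros a _. rewrite Rfunctions.pow1, Rmult_1_r.
  unfold one_series, monomial, Cmod. destruct (list_eq_dec _ _ _); simpl.
  - rewrite Rmult_0_l, Rplus_0_r, !Rmult_1_r, sqrt_1. lra.
  - rewrite Rmult_0_l, Rplus_0_r, sqrt_0. lra.
Qed.

Lemma generator_in_ideal n gens g : In g gens -> in_ideal n gens g.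
Proof.
  induction gens as [|g' gens IH]; intros Hin; [destruct Hin|].
  destruct Hin as [<-|Hin].
  - exists (one_series n :: repeat szero (length gens)). split; [simpl; now rewrite repeat_length|].
    split.
    + constructor; [apply one_series_convergent|]. apply Forall_forall.
      intros h Hh. apply repeat_spec in Hh as ->. apply szero_convergent.
    + intros a Ha. simpl. unfold sadd. rewrite smul_one_l, lin_comb_szero by assumption. ring.
  - destruct (IH Hin) as [hs [Hl [Hc Heq]]].
    exists (szero :: hs). split; [simpl; congruence|]. split.
    + constructor; [apply szero_convergent | assumption].
    + intros a Ha. simpl. unfold sadd. rewrite smul_szero_l, Heq by assumption. ring.
Qed.

Lemma in_ideal_vanishes_below n gens z K g :
  (forall h g', In g' gens -> vanishes_below (gcomp n (smul h g') z) K) ->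
  in_ideal n gens g -> vanishes_below (gcomp n g z) K.
Proof.
  intros Hgen [hs [_ [_ Heq]]] k Hk. rewrite (gcomp_ext _ _ _ _ _ Heq). clear Heq.
  revert hs Hgen; induction gens as [|g' gens IH]; intros [|h hs] Hgen; simpl;
    try apply gcomp_szero.
  rewrite gcomp_sadd, Hgen, IH by (simpl; auto; intros; apply Hgen; simpl; auto). ring.
Qed.

(** * The ratios v(g∘z)/v(z) and T_1 *)

Lemma ER_le_trans x y z : ER_le x y -> ER_le y z -> ER_le x z.
Proof. destruct x, y, z; simpl; auto; try lra; tauto. Qed.

Lemma inf_exists (P : ER -> Prop) : (forall r, P (Fin r) -> 0 <= r) -> exists s, IsInf P s.
Proof.
  intros Hnn. destruct (classic (exists r, P (Fin r))) as [[r0 Hr0]|Hno].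
  - set (E := fun y => P (Fin (- y))).
    assert (Hb : bound E) by (exists 0; intros y Hy; apply Hnn in Hy; lra).
    assert (He : exists y, E y) by (exists (- r0); unfold E; now rewrite Ropp_involutive).
    destruct (completeness E Hb He) as [m [Hub Hlub]].
    exists (Fin (- m)). split.
    + intros [r|] Hr; simpl; auto.
      assert (Hy : E (- r)) by (unfold E; now rewrite Ropp_involutive).
      apply Hub in Hy. lra.
    + intros [v|] Hv; simpl.
      * enough (m <= - v) by lra. apply Hlub. intros y Hy. apply Hv in Hy. simpl in Hy. lra.
      * exact (Hv _ Hr0).
  - exists PInf. split.
    + intros [r|] Hr; simpl; eauto.
    + intros [v|] _; simpl; auto.
Qed.

Lemma sup_exists (P : ER -> Prop) : (exists x, P x) -> exists s, IsSup P s.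
Proof.
  intros [x0 Hx0]. destruct (classic (P PInf)) as [HP|HP].
  - exists PInf. split.
    + intros [r|] _; simpl; auto.
    + intros u Hu. now apply Hu.
  - set (E := fun r => P (Fin r)).
    assert (He : exists r, E r) by (destruct x0 as [r|]; [exists r; auto | contradiction]).
    destruct (classic (bound E)) as [Hb|Hb].
    + destruct (completeness E Hb He) as [m [Hub Hlub]].
      exists (Fin m). split.
      * intros [r|] Hr; simpl; [now apply Hub | contradiction].
      * intros [v|] Hv; simpl; auto. apply Hlub. intros y Hy. exact (Hv _ Hy).
    + exists PInf. split.
      * intros [r|] _; simpl; auto.
      * intros [v|] Hv; simpl; auto. apply Hb. exists v. intros y Hy. exact (Hv _ Hy).
Qed.

Lemma ratio_nonneg n g z r : ratio n g z (Fin r) -> 0 <= r.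
Proof.
  intros [m [_ [[k [_ E]]|[_ E]]]]; [|discriminate]. injection E as ->.
  destruct m.
  - simpl. unfold Rdiv. rewrite Rinv_0. lra.
  - unfold Rdiv. apply Rmult_le_pos; [apply pos_INR|].
    apply Rlt_le, Rinv_0_lt_compat, lt_0_INR. lia.
Qed.

Lemma Fin_INR_div_ge k m K :
  (0 < m)%nat -> (K * m <= k)%nat -> ER_le (Fin (INR K)) (Fin (INR k / INR m)).
Proof.
  intros Hm Hk. simpl. assert (Hm' : 0 < INR m) by (apply lt_0_INR; lia).
  apply Rmult_le_reg_r with (INR m); auto. unfold Rdiv.
  rewrite Rmult_assoc, Rinv_l, Rmult_1_r by lra. rewrite <- mult_INR. now apply le_INR.
Qed.

Lemma Fin_INR_div_le k m K :
  (0 < m)%nat -> (k <= K * m)%nat -> ER_le (Fin (INR k / INR m)) (Fin (INR K)).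
Proof.
  intros Hm Hk. simpl. assert (Hm' : 0 < INR m) by (apply lt_0_INR; lia).
  apply Rmult_le_reg_r with (INR m); auto. unfold Rdiv.
  rewrite Rmult_assoc, Rinv_l, Rmult_1_r by lra. rewrite <- mult_INR. now apply le_INR.
Qed.

Lemma ratio_ge n g z m K r :
  curve_ord n z m -> (0 < m)%nat -> vanishes_below (gcomp n g z) (K * m) ->
  ratio n g z r -> ER_le (Fin (INR K)) r.
Proof.
  intros Hm Hm0 Hlow [m' [Hm' [[k [[Hk _] ->]]|[_ ->]]]]; simpl; auto.
  pose proof (curve_ord_unique _ _ _ _ Hm Hm') as <-.
  apply Fin_INR_div_ge; auto.
  destruct (Nat.lt_ge_cases k (K * m)) as [Hlt|]; auto. now exfalso; apply Hk, Hlow.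
Qed.

Lemma ratio_le n g z m k K :
  curve_ord n z m -> (0 < m)%nat -> ord1 (gcomp n g z) (Some k) -> (k <= K * m)%nat ->
  exists r, ratio n g z r /\ ER_le r (Fin (INR K)).
Proof.
  intros Hm Hm0 Hk HkK. exists (Fin (INR k / INR m)). split.
  - exists m. split; auto. left. eauto.
  - now apply Fin_INR_div_le.
Qed.

Lemma T1_ge n J c z t :
  in_Gamma n z -> (forall g r, J g -> ratio n g z r -> ER_le c r) -> T1_is n J t -> ER_le c t.
Proof.
  intros Hz Hc HT.
  destruct (inf_exists (fun r => exists g, J g /\ ratio n g z r)) as [s Hs].
  { intros r [g [_ Hr]]. eapply ratio_nonneg; eauto. }
  apply ER_le_trans with s.
  - apply Hs. intros r [g [Hg Hr]]. eauto.
  - apply HT. eauto.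
Qed.

Lemma T1_le n J c :
  (exists z, in_Gamma n z) ->
  (forall z, in_Gamma n z -> exists g r, J g /\ ratio n g z r /\ ER_le r c) ->
  exists t, T1_is n J t /\ ER_le t c.
Proof.
  intros [z0 Hz0] Hc.
  destruct (sup_exists (fun s => exists z, in_Gamma n z /\
                          IsInf (fun r => exists g, J g /\ ratio n g z r) s)) as [t Ht].
  { destruct (inf_exists (fun r => exists g, J g /\ ratio n g z0 r)) as [s0 Hs0].
    - intros r [g [_ Hr]]. eapply ratio_nonneg; eauto.
    - eauto. }
  exists t. split; auto. apply Ht. intros s [z [Hz Hs]].
  destruct (Hc z Hz) as [g [r [Hg [Hr Hrc]]]].
  apply ER_le_trans with r; auto. apply Hs. eauto.
Qed.

(** * T_2(I) = 3 *)

Lemma gcomp_f1 z k : through_origin 3 z ->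
  gcomp 3 f1 z k = Csub (pow1 (z 0%nat) 3 k) (mul1 (z 1%nat) (z 2%nat) k).
Proof.
  intros Hz. unfold f1. rewrite gcomp_sadd, !gcomp_monomial by (auto; reflexivity).
  cbn [mono_from]. rewrite !pow1_0, !pow1_1, !mul1_one_l, !mul1_one_r. unfold Csub. ring.
Qed.

Lemma gcomp_f2 z k : through_origin 3 z -> gcomp 3 f2 z k = pow1 (z 1%nat) 2 k.
Proof.
  intros Hz. unfold f2. rewrite gcomp_monomial by (auto; reflexivity).
  cbn [mono_from]. rewrite !pow1_0, !mul1_one_l, !mul1_one_r. ring.
Qed.

Lemma gcomp_linear_form3 c z k : through_origin 3 z ->
  gcomp 3 (linear_form 3 c) z k =
  Cadd (Cmul (c 0%nat) (z 0%nat k))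
    (Cadd (Cmul (c 1%nat) (z 1%nat k)) (Cmul (c 2%nat) (z 2%nat k))).
Proof.
  intros Hz. unfold linear_form. cbn [seq map fold_right].
  rewrite !gcomp_sadd, gcomp_szero, !gcomp_monomial by (auto; reflexivity).
  cbv [unit_idx seq map Nat.eqb]. cbn [mono_from].
  rewrite !pow1_0, !pow1_1, !mul1_one_l, !mul1_one_r. ring.
Qed.

(* Multiplicativity of composition, (h g)∘z = (h∘z)(g∘z), is not developed; the finitely
   many low coefficients of (h g)∘z for polynomial z are expanded symbolically instead. *)
Ltac expand_coefficients := cbv -[Cmul Cadd Copp C0 C1]; try ring.

Definition line (p q : Cx) : curve := fun i k =>
  match i, k with 0%nat, 1%nat => p | 2%nat, 1%nat => q | _, _ => C0 end.

Lemma line_through_origin p q : through_origin 3 (line p q).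
Proof. intros [|[|[|i]]] Hi; reflexivity. Qed.

Lemma line_vanishes_above p q i : vanishes_above (line p q i) 1.
Proof. intros [|[|j]] Hj; try lia; destruct i as [|[|[|i]]]; reflexivity. Qed.

Lemma line_smul_f1 p q h : vanishes_below (gcomp 3 (smul h f1) (line p q)) 3.
Proof. intros [|[|[|k]]] Hk; try lia; expand_coefficients. Qed.

Lemma line_smul_f2 p q h : vanishes_below (gcomp 3 (smul h f2) (line p q)) 3.
Proof. intros [|[|[|k]]] Hk; try lia; expand_coefficients. Qed.

Lemma line_smul_kernel_form p q w h :
  Cmul (w 0%nat) p = Copp (Cmul (w 2%nat) q) ->
  vanishes_below (gcomp 3 (smul h (linear_form 3 w)) (line p q)) 3.
Proof. intros E [|[|[|k]]] Hk; try lia; expand_coefficients; ring [E]. Qed.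

Lemma T1_ge_3 w t :
  T1_is 3 (in_ideal 3 (I_gens ++ [linear_form 3 w])) t -> ER_le (Fin 3) t.
Proof.
  assert (Hline : forall p q, p <> C0 \/ q <> C0 -> Cmul (w 0%nat) p = Copp (Cmul (w 2%nat) q) ->
            T1_is 3 (in_ideal 3 (I_gens ++ [linear_form 3 w])) t -> ER_le (Fin 3) t).
  { intros p q Hpq E. assert (Hi : exists i, (i < 3)%nat /\ line p q i 1%nat <> C0)
      by (destruct Hpq; [exists 0%nat | exists 2%nat]; auto).
    destruct Hi as [i [Hi H1]].
    apply (T1_ge _ _ _ (line p q)).
    - eapply in_Gamma_polynomial; eauto using line_vanishes_above, line_through_origin.
    - intros g r Hg Hr. replace 3 with (INR 3) by (simpl; ring).
      eapply ratio_ge; eauto using curve_ord_1, line_through_origin.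
      eapply in_ideal_vanishes_below; eauto.
      intros h g' [<-|[<-|[<-|[]]]];
        auto using line_smul_f1, line_smul_f2, line_smul_kernel_form. }
  destruct (classic (w 0%nat = C0)) as [Hw|Hw].
  - apply (Hline C1 C0); [left; apply C1_neq0 | rewrite Hw; ring].
  - apply (Hline (w 2%nat) (Copp (w 0%nat))); [right; now apply Copp_neq0 | ring].
Qed.

Definition w3 : nat -> Cx := fun i => match i with 2%nat => C1 | _ => C0 end.

Lemma z3_ideal_ratio_le_3 z : in_Gamma 3 z ->
  exists g r, in_ideal 3 (I_gens ++ [linear_form 3 w3]) g /\ ratio 3 g z r /\ ER_le r (Fin 3).
Proof.
  intros Hz. assert (Horig : through_origin 3 z) by (intros i Hi; now apply Hz).
  destruct (curve_ord_exists _ _ Hz) as [m [Hm Hm0]].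
  replace 3 with (INR 3) by (simpl; ring).
  destruct (classic (exists j, (j <= 3 * m)%nat /\ z 2%nat j <> C0)) as [[j [Hj Hzj]]|Hz2].
  - destruct (ord1_exists (z 2%nat)) as [j0 [Hj0 Hlow]]; [eauto|].
    assert (j0 <= j)%nat by (destruct (Nat.lt_ge_cases j j0); auto; now exfalso; apply Hzj, Hlow).
    destruct (ratio_le 3 (linear_form 3 w3) z m j0 3 Hm Hm0) as [r Hr]; [|lia|].
    + apply (ord1_ext (z 2%nat)); [|now split].
      intros k. rewrite gcomp_linear_form3 by assumption. simpl. ring.
    + exists (linear_form 3 w3), r. split; [apply generator_in_ideal; simpl; auto | exact Hr].
  - assert (Hz2' : vanishes_below (z 2%nat) (S (3 * m))).
    { intros j Hj. apply NNPP. intros Hne. apply Hz2. exists j. split; [lia | auto]. }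
    destruct (classic (z 0%nat m = C0)) as [Hz0|Hz0].
    + assert (Hz1 : ord1 (z 1%nat) (Some m)).
      { apply (ord1_coordinate 3 z m); auto. destruct Hm as [[[|[|[|i]]] [Hi Hzi]] _]; try lia.
        - contradiction.
        - assumption.
        - exfalso. apply Hzi, Hz2'. lia. }
      destruct (ratio_le 3 f2 z m (2 * m) 3 Hm Hm0) as [r Hr]; [|lia|].
      * apply (ord1_ext (pow1 (z 1%nat) 2)); [|now apply ord1_pow1].
        intros k. now rewrite gcomp_f2.
      * exists f2, r. split; [apply generator_in_ideal; simpl; auto | exact Hr].
    + destruct (ratio_le 3 f1 z m (3 * m) 3 Hm Hm0) as [r Hr]; [|lia|].
      * apply (ord1_ext (fun k => Cadd (pow1 (z 0%nat) 3 k) (Copp (mul1 (z 1%nat) (z 2%nat) k)))).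
        { intros k. now rewrite gcomp_f1. }
        apply ord1_add_higher.
        -- apply ord1_pow1, (ord1_coordinate 3 z m); auto.
        -- intros j Hj. rewrite (mul1_vanishes_below _ _ m (S (3 * m))); [ring| | |lia].
           ++ intros j' Hj'. apply Hm; lia.
           ++ exact Hz2'.
      * exists f1, r. split; [apply generator_in_ideal; simpl; auto | exact Hr].
Qed.

Lemma T2_I : Tq_is 3 2 I_gens (Fin 3).
Proof.
  split.
  - intros s [[|w [|]] [Hl HT]]; try discriminate. now apply (T1_ge_3 w).
  - intros u Hu.
    destruct (T1_le 3 (in_ideal 3 (I_gens ++ [linear_form 3 w3])) (Fin 3)) as [t [Ht Ht3]].
    + exists (line C1 C0). apply (in_Gamma_polynomial _ _ 1 0);
        auto using line_vanishes_above, line_through_origin, C1_neq0.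
    + apply z3_ideal_ratio_le_3.
    + apply ER_le_trans with t; auto. apply Hu. now exists [w3].
Qed.

(** * The curves on the plane sections *)

Definition gam (a b : Cx) : curve := fun i k =>
  match i, k with
  | 0%nat, 1%nat => Copp a | 0%nat, 2%nat => Copp b
  | 1%nat, 2%nat => Copp a | 1%nat, 3%nat => Copp b
  | 2%nat, 1%nat => Cmul a a | 2%nat, 2%nat => Cadd (Cmul a b) (Cmul a b)
  | 2%nat, 3%nat => Cmul b b
  | _, _ => C0
  end.

Lemma gam_through_origin a b : through_origin 3 (gam a b).
Proof. intros [|[|[|i]]] Hi; reflexivity. Qed.

Lemma gam_vanishes_above a b i : vanishes_above (gam a b i) 3.
Proof. intros [|[|[|[|j]]]] Hj; try lia; destruct i as [|[|[|i]]]; reflexivity. Qed.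

Lemma gam_f1 a b k : gcomp 3 f1 (gam a b) k = C0.
Proof.
  rewrite gcomp_f1 by apply gam_through_origin.
  destruct (Nat.le_gt_cases k 9).
  - do 10 (destruct k as [|k]; [unfold Csub; expand_coefficients|]). lia.
  - rewrite (pow1_vanishes_above _ 3 3), (mul1_vanishes_above _ _ 3 3)
      by (auto using gam_vanishes_above; lia).
    unfold Csub. ring.
Qed.

Lemma gam_plane a b k : gcomp 3 (plane_form a b) (gam a b) k = C0.
Proof.
  unfold plane_form. rewrite gcomp_linear_form3 by apply gam_through_origin.
  destruct k as [|[|[|[|k]]]]; expand_coefficients.
Qed.

Lemma gam_smul_f1 a b h : vanishes_below (gcomp 3 (smul h f1) (gam a b)) 4.
Proof. intros [|[|[|[|k]]]] Hk; try lia; expand_coefficients. Qed.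

Lemma gam_smul_f2 a b h : vanishes_below (gcomp 3 (smul h f2) (gam a b)) 4.
Proof. intros [|[|[|[|k]]]] Hk; try lia; expand_coefficients. Qed.

Lemma gam_ideal_ratio_ge_4 a b g r :
  a <> C0 -> in_ideal 3 I_gens g -> ratio 3 g (gam a b) r -> ER_le (Fin 4) r.
Proof.
  intros Ha Hg Hr. replace 4 with (INR 4) by (simpl; ring).
  apply (ratio_ge 3 g (gam a b) 1 4); auto.
  - apply (curve_ord_1 _ _ 0); [apply gam_through_origin | lia | now apply Copp_neq0].
  - eapply in_ideal_vanishes_below; eauto.
    intros h g' [<-|[<-|[]]]; auto using gam_smul_f1, gam_smul_f2.
Qed.

Theorem mainTheorem4 :
  Tq_is 3%nat 2%nat I_gens (Fin 3) /\
  (forall a b : Cx, a <> C0 -> b <> C0 ->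
     exists gamma : curve,
       in_Gamma 3%nat gamma /\ minimal_param 3%nat gamma /\
       (forall k, gcomp 3%nat f1 gamma k = C0) /\
       (forall k, gcomp 3%nat (plane_form a b) gamma k = C0) /\
       (forall g r, in_ideal 3%nat I_gens g -> ratio 3%nat g gamma r -> ER_le (Fin 4) r)).
Proof.
  split; [exact T2_I|].
  intros a b Ha _. exists (gam a b).
  assert (Hcoeff : gam a b 0%nat 1%nat <> C0) by now apply Copp_neq0.
  split; [|split; [|split; [|split]]].
  - apply (in_Gamma_polynomial _ _ 3 0); auto using gam_vanishes_above, gam_through_origin.
  - apply (minimal_param_of_coeff1 _ _ 0); [lia | exact Hcoeff].
  - apply gam_f1.
  - apply gam_plane.
  - intros g r. now apply gam_ideal_ratio_ge_4.
Qed.
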